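(* Let $V$ be a complex vector space of finite dimension $N$ and let $(R,F)$ be a couple of compatible braidings on $V\otimes V$. Put $\mathcal{R}=R\,F$. Then for any $N\times N$ matrix $A$ (with entries in $\mathbb{C}$ or in any associative $\mathbb{C}$-algebra, the braidings acting on the numerical tensor factors) $$\mathcal{R}_{12}\,A_{\overline 3}=A_{\overline 3}\,\mathcal{R}_{12},$$ where $\mathcal{R}_{12}=R_{12}F_{12}$ and $A_{\overline 3}=F_{23}F_{12}A_1F_{12}^{-1}F_{23}^{-1}$.
   Context: A braiding is an invertible operator $R\in\mathrm{End}(V\otimes V)$ satisfying $(R\otimes I)(I\otimes R)(R\otimes I)=(I\otimes R)(R\otimes I)(I\otimes R)$. In $\mathrm{End}(V^{\otimes 3})$, $X_{12}=X\otimes I$, $X_{23}=I\otimes X$ for $X\in\mathrm{End}(V\otimes V)$, and $A_1=A\otimes I\otimes I$ for an $N\times N$ matrix $A$. Braidings $R,F$ are compatible if $R_{12}F_{23}F_{12}=F_{23}F_{12}R_{23}$ and $R_{23}F_{12}F_{23}=F_{12}F_{23}R_{12}$. *)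

(* V = C^N with C = R[i] (complex numbers over a realType R). *)
From mathcomp Require Import all_boot all_algebra.
From mathcomp Require Import reals complex mxtens.

Set Implicit Arguments.
Unset Strict Implicit.
Unset Printing Implicit Defensive.

Import GRing.Theory.
Local Open Scope ring_scope.

(* Operators on V^{(x)3} are (N*N*N) x (N*N*N) matrices, with the basis of
   V (x) V (x) V indexed by (i*N + j)*N + k (Kronecker convention of mxtens). *)

Definition op12 {K : pzRingType} {N : nat} (X : 'M[K]_(N * N)) : 'M[K]_(N * N * N) :=
  tensmx X (1%:M : 'M[K]_N).

Definition op23 {K : pzRingType} {N : nat} (X : 'M[K]_(N * N)) : 'M[K]_(N * N * N) :=
  castmx (mulnA N N N, mulnA N N N) (tensmx (1%:M : 'M[K]_N) X).

Definition op1 {K : pzRingType} {N : nat} (A : 'M[K]_N) : 'M[K]_(N * N * N) :=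
  castmx (mulnA N N N, mulnA N N N) (tensmx A (1%:M : 'M[K]_(N * N))).

Definition is_braiding {K : comUnitRingType} {N : nat} (R : 'M[K]_(N * N)) : Prop :=
  R \in unitmx /\
  op12 R *m op23 R *m op12 R = op23 R *m op12 R *m op23 R.

Definition compatible {K : comUnitRingType} {N : nat} (R F : 'M[K]_(N * N)) : Prop :=
  op12 R *m op23 F *m op12 F = op23 F *m op12 F *m op23 R /\
  op23 R *m op12 F *m op23 F = op12 F *m op23 F *m op12 R.

(* Scalar (numerical) operators acting on matrices with entries in a C-algebra B. *)
Definition liftB {C : comUnitRingType} (B : algType C) {m n : nat}
  (X : 'M[C]_(m, n)) : 'M[B]_(m, n) := map_mx (in_alg B) X.

(* Write [u = F23 F12].  Compatibility [R12 F23 F12 = F23 F12 R23] and the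
   braid relation for [F] give [R12 F12 u = R12 F23 F12 F23 = u R23 F23], so
   conjugation by [u] carries [(R F)_12] to [(R F)_23].  Since [A3] is the
   conjugate [u A1 u^-1], the claim reduces to [A1] commuting with the
   scalar operator [(R F)_23], which acts on the other tensor factors. *)

From mathcomp Require Import all_boot all_algebra.
From mathcomp Require Import reals complex mxtens.
Import GRing.Theory.
Local Open Scope ring_scope.

Lemma comm_conj (T : pzRingType) (P Q u v x : T) :
  v * u = 1 -> u * v = 1 -> P * u = u * Q -> GRing.comm x Q ->
  GRing.comm P (u * x * v).
Proof.
move=> vu1 uv1 PuQ xQ.
have QvP : Q * v = v * P.
  by rewrite -[v * P]mulr1 -uv1 !mulrA -(mulrA v) PuQ mulrA vu1 mul1r.
by rewrite /GRing.comm !mulrA PuQ -(mulrA u) -xQ mulrA -!mulrA QvP.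
Qed.

Section TensorProducts.

Variable K : pzRingType.

Lemma tensmx_mul_comm m n p q r s
    (A : 'M[K]_(m, n)) (B : 'M[K]_(p, q)) (C : 'M[K]_(n, r)) (D : 'M[K]_(q, s)) :
  (forall i j k l, GRing.comm (B i j) (C k l)) ->
  tensmx A B *m tensmx C D = tensmx (A *m C) (B *m D).
Proof.
move=> BC; apply/matrixP=> i j.
case: (mxtens_indexP i) => [i1 i2]; case: (mxtens_indexP j) => [j1 j2].
rewrite !mxE !mxtens_indexK mulr_sum; apply: eq_bigr => k _.
by rewrite !mxE !mxtens_indexK -!mulrA; congr (_ * _); rewrite !mulrA BC.
Qed.

Lemma tensmx11 m n : tensmx (1%:M : 'M[K]_m) (1%:M : 'M[K]_n) = 1%:M.
Proof.
apply/matrixP=> i j.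
case: (mxtens_indexP i) => [i1 i2]; case: (mxtens_indexP j) => [j1 j2].
rewrite tensmxE !mxE (inj_eq (can_inj (@mxtens_indexK m n))) xpair_eqE.
by case: (i1 == j1); case: (i2 == j2); rewrite ?mulr1 ?mulr0.
Qed.

Lemma comm_scalar_mx1 n (i j : 'I_n) (x : K) : GRing.comm ((1%:M : 'M[K]_n) i j) x.
Proof. by rewrite mxE; apply/commr_sym/commr_nat. Qed.

Lemma mulmx_castmx m m' (e : m = m') (X Y : 'M[K]_m) :
  castmx (e, e) X *m castmx (e, e) Y = castmx (e, e) (X *m Y).
Proof. by case: m' / e. Qed.

Lemma castmx1 m m' (e : m = m') : castmx (e, e) (1%:M : 'M[K]_m) = 1%:M.
Proof. by case: m' / e. Qed.

Variable N : nat.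
Implicit Types X Y : 'M[K]_(N * N).

Lemma op12M X Y : op12 X *m op12 Y = op12 (X *m Y).
Proof. by rewrite /op12 tensmx_mul_comm ?mulmx1 // => *; apply: comm_scalar_mx1. Qed.

Lemma op23M X Y : op23 X *m op23 Y = op23 (X *m Y).
Proof.
rewrite /op23 mulmx_castmx tensmx_mul_comm ?mul1mx // => *.
exact/commr_sym/comm_scalar_mx1.
Qed.

Lemma op12_1 : op12 (1%:M : 'M[K]_(N * N)) = 1%:M.
Proof. exact: tensmx11. Qed.

Lemma op23_1 : op23 (1%:M : 'M[K]_(N * N)) = 1%:M.
Proof. by rewrite /op23 tensmx11 castmx1. Qed.

End TensorProducts.

Lemma op12_unitmx (K : comUnitRingType) N (X : 'M[K]_(N * N)) :
  X \in unitmx -> op12 X \in unitmx.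
Proof.
move=> uX; have /mulmx1_unit[] // : op12 (invmx X) *m op12 X = 1%:M.
by rewrite op12M mulVmx // op12_1.
Qed.

Lemma op23_unitmx (K : comUnitRingType) N (X : 'M[K]_(N * N)) :
  X \in unitmx -> op23 X \in unitmx.
Proof.
move=> uX; have /mulmx1_unit[] // : op23 (invmx X) *m op23 X = 1%:M.
by rewrite op23M mulVmx // op23_1.
Qed.

(* Scalar entries lie in the centre of [B], and [A_1], [X_23] act on
   complementary tensor factors. *)
Lemma op1_liftB_op23_comm (C : comUnitRingType) (B : algType C) N
    (A : 'M[B]_N) (X : 'M[C]_(N * N)) :
  op1 A *m liftB B (op23 X) = liftB B (op23 X) *m op1 A.
Proof.
rewrite /op1 /op23 /liftB map_castmx map_mxT map_mx1 !mulmx_castmx.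
rewrite !tensmx_mul_comm ?mulmx1 ?mul1mx // => i j k l.
  by rewrite !mxE; apply: comm_alg.
exact: comm_scalar_mx1.
Qed.

Lemma compatible_op12_intertwine (K : comUnitRingType) N (R F : 'M[K]_(N * N)) :
  is_braiding F -> compatible R F ->
  op12 (R *m F) *m (op23 F *m op12 F) = (op23 F *m op12 F) *m op23 (R *m F).
Proof.
move=> [_ braidF] [compRF _].
by rewrite -op12M -op23M -!mulmxA (mulmxA (op12 F) (op23 F)) braidF !mulmxA compRF.
Qed.

Theorem mainTheorem3 (Rr : realType) (N : nat) (R F : 'M[Rr[i]]_(N * N))
  (B : algType Rr[i]) (A : 'M[B]_N) :
  is_braiding R -> is_braiding F -> compatible R F ->
  let calR12 : 'M[B]_(N * N * N) := liftB B (op12 R) *m liftB B (op12 F) in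
  let A3 : 'M[B]_(N * N * N) :=
    liftB B (op23 F) *m liftB B (op12 F) *m op1 A
      *m liftB B (invmx (op12 F)) *m liftB B (invmx (op23 F)) in
  calR12 *m A3 = A3 *m calR12.
Proof.
move=> _ braidF compRF /=.
have [uF _] := braidF.
have uF12 : op12 F \in unitmx by exact: op12_unitmx.
have uF23 : op23 F \in unitmx by exact: op23_unitmx.
set u := op23 F *m op12 F; set v := invmx (op12 F) *m invmx (op23 F).
have vu1 : v *m u = 1%:M by rewrite mulmxA mulmxKV // mulVmx.
have uv1 : u *m v = 1%:M by rewrite mulmxA mulmxK // mulmxV.
have -> : liftB B (op23 F) *m liftB B (op12 F) *m op1 A
            *m liftB B (invmx (op12 F)) *m liftB B (invmx (op23 F))
          = liftB B u *m op1 A *m liftB B v by rewrite /liftB !map_mxM !mulmxA.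
rewrite -map_mxM op12M.
apply: (@comm_conj _ _ (liftB B (op23 (R *m F)))).
- by rewrite -mulmxE -map_mxM vu1 map_mx1.
- by rewrite -mulmxE -map_mxM uv1 map_mx1.
- by rewrite -mulmxE -!map_mxM compatible_op12_intertwine.
- exact: op1_liftB_op23_comm.
Qed.
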